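(* Let $\mathfrak g$ be a finite-dimensional complex simple Lie algebra, $\lambda\in P^+$, and $\boldsymbol\lambda=(\lambda_1,\lambda_2)$, $\boldsymbol\mu=(\mu_1,\mu_2)\in P^+(\lambda,2)$. Then the following are equivalent: (a) $\boldsymbol\lambda\preceq\boldsymbol\mu$; (b) $(\lambda_1-\mu_1)(h_\alpha)\,(\mu_1-\lambda_2)(h_\alpha)\ge0$ for all $\alpha\in R^+$; (c) $(\lambda_1-\mu_1)(h_\alpha)\,(\mu_1-\lambda_2)(h_\alpha)\ge0$ for all $\alpha\in R$. Moreover, if $w\in W$ is such that $w(\lambda_1-\lambda_2)\in P^+$, then $\boldsymbol\lambda\preceq\boldsymbol\mu$ if and only if both $w(\lambda_1-\mu_1)\in P^+$ and $w(\mu_1-\lambda_2)\in P^+$.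
   Context: $\mathfrak g$ has Cartan subalgebra $\mathfrak h$, roots $R$, positive roots $R^+$, coroots $h_\alpha$ for $\alpha\in R^+$ with $h_{-\alpha}=-h_\alpha$, Weyl group $W$ (acting on weights), $P^+$ the dominant integral weights. $P^+(\lambda,2)=\{(\lambda_1,\lambda_2)\in(P^+)^2:\lambda_1+\lambda_2=\lambda\}$, and $(\lambda_1,\lambda_2)\preceq(\mu_1,\mu_2)$ means $\min\{\lambda_1(h_\alpha),\lambda_2(h_\alpha)\}\le\min\{\mu_1(h_\alpha),\mu_2(h_\alpha)\}$ for all $\alpha\in R^+$. *)

(* Abstract (reduced, crystallographic, irreducible) root
   system of a finite-dimensional complex simple Lie algebra, realised on the
   rational form h*_Q = 'rV[rat]_n of the dual Cartan subalgebra; coroots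
   h_alpha are column vectors (elements of h_Q), pairing lambda(h) = lambda *m h. *)
From HB Require Import structures.
From mathcomp Require Import all_boot all_order all_algebra.
Set Implicit Arguments. Unset Strict Implicit. Unset Printing Implicit Defensive.
Import Order.TTheory GRing.Theory Num.Theory.
Local Open Scope ring_scope.

Section RootSystem.
Variable n : nat.
Notation V := 'rV[rat]_n.
Notation H := 'cV[rat]_n.

Definition pair (lam : V) (h : H) : rat := (lam *m h) 0 0.

Definition refl (hc : V -> H) (a x : V) : V := x - pair x (hc a) *: a.

Definition root_system (R : seq V) (hc : V -> H) : Prop :=
  (0 \notin R) /\
  [/\ (1%:M <= \matrix_(i < size R) nth 0 R i)%MS,
      (forall a, a \in R -> pair a (hc a) = 2),
      (forall a b, a \in R -> b \in R -> refl hc a b \in R),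
      (forall a b, a \in R -> b \in R -> pair b (hc a) \is a Num.int)
    & (forall a (c : rat), a \in R -> c *: a \in R -> c = 1 \/ c = -1)].

Definition irreducible (R : seq V) (hc : V -> H) : Prop :=
  forall A : pred V,
    (forall a b, a \in R -> b \in R -> A a -> ~~ A b -> pair b (hc a) = 0) ->
    (forall a, a \in R -> A a) \/ (forall a, a \in R -> ~~ A a).

(* f is regular: no root vanishes on f; it determines the positive system *)
Definition regular (R : seq V) (f : H) : Prop :=
  forall a, a \in R -> pair a f != 0.

Definition pos_roots (R : seq V) (f : H) : seq V := [seq a <- R | 0 < pair a f].

Definition dominant (R : seq V) (hc : V -> H) (f : H) (lam : V) : Prop :=
  (forall a, a \in R -> pair lam (hc a) \is a Num.int) /\
  (forall a, a \in pos_roots R f -> pair lam (hc a) \is a Num.nat).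

Definition preceq (R : seq V) (hc : V -> H) (f : H) (l1 l2 m1 m2 : V) : Prop :=
  forall a, a \in pos_roots R f ->
    Num.min (pair l1 (hc a)) (pair l2 (hc a))
      <= Num.min (pair m1 (hc a)) (pair m2 (hc a)).

(* Weyl group element s_{a_1} o ... o s_{a_k} given by a word of roots *)
Definition weyl_act (hc : V -> H) (ws : seq V) (x : V) : V :=
  foldr (refl hc) x ws.

End RootSystem.

From HB Require Import structures.
From mathcomp Require Import all_boot all_order all_algebra.
From mathcomp Require Import ring lra.
Set Implicit Arguments. Unset Strict Implicit. Unset Printing Implicit Defensive.
Import Order.TTheory GRing.Theory Num.Theory.
Local Open Scope ring_scope.

(* The whole statement reduces to one elementary inequality: for reals with
   x + y = u + v, min(x, y) <= min(u, v) holds iff (x - u)(u - y) >= 0.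
   Applied to x = l1(h_a), y = l2(h_a), u = m1(h_a), v = m2(h_a) it gives
   (a) <-> (b) root by root.  For (b) <-> (c) we use h_{-a} = -h_a, which
   leaves the product unchanged, and that every root is positive or negative.
   For the Weyl group statement write p = l1 - m1, q = m1 - l2 and
   d = p + q = l1 - l2.  For w in W and a root b, (w x)(h_b) = x(h_b') with
   b' a root independent of x.  If p q >= 0 on all coroots and w d is
   dominant, then for b positive p(h_b') + q(h_b') >= 0 together with
   p(h_b') q(h_b') >= 0 forces both to be >= 0, so w p and w q are dominant.
   Conversely, if w p and w q are dominant then p(h_a) = (w p)(h_{w a}) and
   q(h_a) = (w q)(h_{w a}) have the same sign for every root a.

   The only nontrivial root-system fact needed is the transformation rule of
   coroots under reflections, h_{s_c b} = h_b - c(h_b) h_c (giving h_{-a} =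
   -h_a and the self-adjointness of W); it follows from the uniqueness of the
   coroot, which in turn uses that R spans h* and is finite. *)

Lemma pairD n (x y : 'rV[rat]_n) h : pair (x + y) h = pair x h + pair y h.
Proof. by rewrite /pair mulmxDl mxE. Qed.
Lemma pairN n (x : 'rV[rat]_n) h : pair (- x) h = - pair x h.
Proof. by rewrite /pair mulNmx mxE. Qed.
Lemma pairZ n k (x : 'rV[rat]_n) h : pair (k *: x) h = k * pair x h.
Proof. by rewrite /pair -scalemxAl mxE. Qed.
Lemma pairDr n (x : 'rV[rat]_n) h h' : pair x (h + h') = pair x h + pair x h'.
Proof. by rewrite /pair mulmxDr mxE. Qed.
Lemma pairNr n (x : 'rV[rat]_n) h : pair x (- h) = - pair x h.
Proof. by rewrite /pair mulmxN mxE. Qed.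
Lemma pairZr n k (x : 'rV[rat]_n) h : pair x (k *: h) = k * pair x h.
Proof. by rewrite /pair -scalemxAr mxE. Qed.

Ltac pair_expand := rewrite /refl ?(pairD, pairN, pairZ, pairDr, pairNr, pairZr).

Lemma min_le_min_iff (F : realFieldType) (x y u v : F) : x + y = u + v ->
  (Num.min x y <= Num.min u v) = (0 <= (x - u) * (u - y)).
Proof.
move=> sum_eq; have -> : v = x + y - u by rewrite sum_eq; ring.
have [hxy|hxy] := leP x y; have [huv|huv] := leP u (x + y - u);
  rewrite ?(min_l hxy) ?(min_r (ltW hxy)) ?(min_l huv) ?(min_r (ltW huv));
  by apply/idP/idP => H; nra.
Qed.

(* A nonzero vector has infinitely many distinct multiples, so a finite list
   cannot contain a whole arithmetic progression r, r + t c, r + 2t c, ... *)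
Lemma progression_not_in_seq n (s : seq 'rV[rat]_n) (r c : 'rV[rat]_n) (t : rat) :
  c != 0 -> t != 0 -> ~ (forall k : nat, r + (k%:R * t) *: c \in s).
Proof.
move=> c0 t0 all_in.
pose prog := [seq r + (k%:R * t) *: c | k <- iota 0 (size s).+1].
have uniq_prog : uniq prog.
  rewrite map_inj_uniq ?iota_uniq // => k1 k2 /addrI /eqP.
  rewrite -subr_eq0 -scalerBl scaler_eq0 (negbTE c0) orbF subr_eq0.
  by move=> /eqP /(mulIf t0) /eqP; rewrite eqr_nat => /eqP.
have sub_prog : {subset prog <= s} by move=> x /mapP [k _ ->].
by have := uniq_leq_size uniq_prog sub_prog; rewrite size_map size_iota ltnn.
Qed.

Section RootSystemFacts.
Variables (n : nat) (R : seq 'rV[rat]_n) (hc : 'rV[rat]_n -> 'cV[rat]_n).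
Hypothesis hR : root_system R hc.

Let R_closed : forall a b, a \in R -> b \in R -> refl hc a b \in R.
Proof. by case: hR => _ []. Qed.
Let coroot2 : forall a, a \in R -> pair a (hc a) = 2.
Proof. by case: hR => _ []. Qed.

(* Since R spans h*, a coroot-direction annihilated by every root is zero. *)
Lemma roots_separate (d : 'cV[rat]_n) : (forall r, r \in R -> pair r d = 0) -> d = 0.
Proof.
move=> kill; case: hR => _ [span _ _ _ _].
set M := \matrix_(i < size R) nth 0 R i in span.
have Md0 : M *m d = 0.
  apply/row_matrixP => i; rewrite row_mul rowK row0.
  by apply/rowP => j; rewrite ord1 [RHS]mxE; exact: kill (mem_nth 0 (ltn_ord i)).
by case/submxP: span => D defM; rewrite -[d]mul1mx defM -mulmxA Md0 mulmx0.
Qed.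

(* With d = h_c - h, the map
   y |-> y + y(d) c preserves R and fixes y(d), so R would contain the
   progression r + k r(d) c unless r(d) = 0. *)
Lemma coroot_unique c h : c \in R -> pair c h = 2 ->
  (forall r, r \in R -> r - pair r h *: c \in R) -> hc c = h.
Proof.
move=> cR ch2 h_closed; apply/eqP; rewrite -subr_eq0; apply/eqP.
apply: roots_separate => r rR; set d := hc c - h.
have cd0 : pair c d = 0 by rewrite pairDr pairNr coroot2 // ch2 subrr.
have shift_closed y : y \in R -> y + pair y d *: c \in R.
  move=> yR; have -> : y + pair y d *: c = refl hc c y - pair (refl hc c y) h *: c.
    by pair_expand; rewrite ch2; apply/rowP => i; rewrite !mxE; ring.
  exact/h_closed/R_closed.
have progression (k : nat) : r + (k%:R * pair r d) *: c \in R.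
  elim: k => [|k IH]; first by rewrite mul0r scale0r addr0.
  have := shift_closed _ IH; congr (_ \in R).
  rewrite pairD pairZ cd0 mulr0 addr0 -addrA -scalerDl.
  by rewrite mulrSr mulrDl mul1r.
have c0 : c != 0 by apply: contraTneq cR => ->; case: hR.
have [//|rd0] := eqVneq (pair r d) 0.
by case: (progression_not_in_seq c0 rd0 progression).
Qed.

Lemma coroot_refl c b : c \in R -> b \in R ->
  hc (refl hc c b) = hc b - pair c (hc b) *: hc c.
Proof.
move=> cR bR; apply: coroot_unique; first exact: R_closed.
  by pair_expand; rewrite (coroot2 bR) (coroot2 cR); ring.
move=> r rR.
have -> : r - pair r (hc b - pair c (hc b) *: hc c) *: refl hc c b
    = refl hc c (refl hc b (refl hc c r)).
  by pair_expand; rewrite (coroot2 cR); apply/rowP => i; rewrite !mxE; ring.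
by do 3 apply: R_closed => //.
Qed.

Lemma refl_self a : a \in R -> refl hc a a = - a.
Proof. by move=> aR; rewrite /refl coroot2 //; apply/rowP => i; rewrite !mxE; ring. Qed.

Lemma refl_invol c x : c \in R -> refl hc c (refl hc c x) = x.
Proof. by move=> cR; pair_expand; rewrite coroot2 //; apply/rowP => i; rewrite !mxE; ring. Qed.

Lemma coroot_opp a : a \in R -> hc (- a) = - hc a.
Proof.
move=> aR; rewrite -(refl_self aR) (coroot_refl aR aR) coroot2 //.
by apply/colP => i; rewrite !mxE; ring.
Qed.

Lemma pair_refl c b z : c \in R -> b \in R ->
  pair (refl hc c z) (hc b) = pair z (hc (refl hc c b)).
Proof. by move=> cR bR; rewrite (coroot_refl cR bR); pair_expand; ring. Qed.

Lemma weyl_pair_coroot ws b : all (mem R) ws -> b \in R ->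
  exists2 b', b' \in R & forall x, pair (weyl_act hc ws x) (hc b) = pair x (hc b').
Proof.
elim: ws b => [|c ws IH] b /=; first by move=> _ bR; exists b.
case/andP => cR wsR bR.
have [b' b'R Hb'] := IH _ wsR (R_closed cR bR).
by exists b' => // x; rewrite (pair_refl _ cR bR) Hb'.
Qed.

Lemma weyl_root ws a : all (mem R) ws -> a \in R ->
  weyl_act hc ws a \in R /\
  forall x, pair (weyl_act hc ws x) (hc (weyl_act hc ws a)) = pair x (hc a).
Proof.
elim: ws => [|c ws IH] /=; first by move=> _ aR; split.
case/andP => cR wsR aR; have [waR Hw] := IH wsR aR.
split=> [|x]; first exact: R_closed.
by rewrite (pair_refl _ cR (R_closed cR waR)) refl_invol.
Qed.

Variable f : 'cV[rat]_n.
Hypothesis f_regular : regular R f.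

Lemma opp_pos_root a : a \in R -> a \notin pos_roots R f -> - a \in pos_roots R f.
Proof.
move=> aR; rewrite !mem_filter aR andbT => not_pos; apply/andP; split.
  by rewrite pairN oppr_gt0 lt_neqAle (f_regular aR) /= leNgt.
by rewrite -(refl_self aR); apply: R_closed.
Qed.

(* p(h_a) q(h_a) >= 0 is unchanged under a -> -a, so it holds on R^+ iff on R. *)
Lemma prod_cond_pos_roots (p q : 'rV[rat]_n) :
  (forall a, a \in pos_roots R f -> 0 <= pair p (hc a) * pair q (hc a)) <->
  (forall a, a \in R -> 0 <= pair p (hc a) * pair q (hc a)).
Proof.
split=> H a; last by rewrite mem_filter => /andP [_ aR]; apply: H.
move=> aR; have [|not_pos] := boolP (a \in pos_roots R f); first exact: H.
by have := H _ (opp_pos_root aR not_pos); rewrite (coroot_opp aR) !pairNr mulrNN.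
Qed.

Lemma weyl_dominant_summand ws (p q d : 'rV[rat]_n) :
  all (mem R) ws -> p + q = d -> dominant R hc f (weyl_act hc ws d) ->
  (forall a, a \in R -> pair p (hc a) \is a Num.int) ->
  (forall a, a \in R -> 0 <= pair p (hc a) * pair q (hc a)) ->
  dominant R hc f (weyl_act hc ws p).
Proof.
move=> wsR pq_d [_ wd_dom] p_int pq_ge0; split.
  by move=> b bR; have [b' b'R ->] := weyl_pair_coroot wsR bR; apply: p_int.
move=> b bP; have bR : b \in R by move: bP; rewrite mem_filter => /andP [].
have [b' b'R Hb] := weyl_pair_coroot wsR bR.
rewrite Hb natrEint p_int //=.
have d_ge0 : 0 <= pair d (hc b') by rewrite -Hb; apply/natr_ge0/wd_dom.
by move: d_ge0 (pq_ge0 _ b'R); rewrite -pq_d pairD; nra.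
Qed.

Lemma prod_cond_weyl_dominant ws (p q d : 'rV[rat]_n) :
  all (mem R) ws -> p + q = d -> dominant R hc f (weyl_act hc ws d) ->
  (forall a, a \in R -> pair p (hc a) \is a Num.int) ->
  (forall a, a \in R -> pair q (hc a) \is a Num.int) ->
  (forall a, a \in R -> 0 <= pair p (hc a) * pair q (hc a)) <->
  dominant R hc f (weyl_act hc ws p) /\ dominant R hc f (weyl_act hc ws q).
Proof.
move=> wsR pq_d wd_dom p_int q_int; split=> [pq_ge0|].
  split; first exact: (weyl_dominant_summand wsR pq_d).
  have qp_d : q + p = d by rewrite addrC.
  apply: (weyl_dominant_summand wsR qp_d wd_dom q_int) => a aR.
  by rewrite mulrC; apply: pq_ge0.
case=> [[_ wp_dom] [_ wq_dom]] a aR; have [waR Hw] := weyl_root wsR aR.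
rewrite -(Hw p) -(Hw q); have [wa_pos|wa_neg] := boolP (weyl_act hc ws a \in pos_roots R f).
  by apply: mulr_ge0; apply: natr_ge0; [apply: wp_dom | apply: wq_dom].
have neg := opp_pos_root waR wa_neg.
move: (natr_ge0 (wp_dom _ neg)) (natr_ge0 (wq_dom _ neg)).
by rewrite (coroot_opp waR) !pairNr; nra.
Qed.

End RootSystemFacts.

Theorem proposition5p1 (n : nat) (R : seq 'rV[rat]_n) (hc : 'rV[rat]_n -> 'cV[rat]_n)
  (f : 'cV[rat]_n) :
  (0 < n)%N -> root_system R hc -> irreducible R hc -> regular R f ->
  forall lam l1 l2 m1 m2 : 'rV[rat]_n,
    dominant R hc f lam ->
    dominant R hc f l1 -> dominant R hc f l2 -> l1 + l2 = lam ->
    dominant R hc f m1 -> dominant R hc f m2 -> m1 + m2 = lam ->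
    [/\ (preceq R hc f l1 l2 m1 m2 <->
           (forall a, a \in pos_roots R f ->
              0 <= pair (l1 - m1) (hc a) * pair (m1 - l2) (hc a))),
        (preceq R hc f l1 l2 m1 m2 <->
           (forall a, a \in R ->
              0 <= pair (l1 - m1) (hc a) * pair (m1 - l2) (hc a)))
      & (forall ws : seq 'rV[rat]_n, all (mem R) ws ->
           dominant R hc f (weyl_act hc ws (l1 - l2)) ->
           (preceq R hc f l1 l2 m1 m2 <->
              dominant R hc f (weyl_act hc ws (l1 - m1)) /\
              dominant R hc f (weyl_act hc ws (m1 - l2))))].
Proof.
move=> _ hR _ f_reg lam l1 l2 m1 m2 _ [l1_int _] [l2_int _] l_sum [m1_int _] _ m_sum.
have min_iff a : (Num.min (pair l1 (hc a)) (pair l2 (hc a))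
      <= Num.min (pair m1 (hc a)) (pair m2 (hc a)))
    = (0 <= pair (l1 - m1) (hc a) * pair (m1 - l2) (hc a)).
  by rewrite !pairD !pairN; apply: min_le_min_iff; rewrite -!pairD l_sum m_sum.
have a_iff_b : preceq R hc f l1 l2 m1 m2 <->
    (forall a, a \in pos_roots R f ->
       0 <= pair (l1 - m1) (hc a) * pair (m1 - l2) (hc a)).
  by split=> H a aP; [rewrite -min_iff | rewrite min_iff]; apply: H.
have a_iff_c := iff_trans a_iff_b (prod_cond_pos_roots hR f_reg (l1 - m1) (m1 - l2)).
split=> // ws wsR wd_dom; rewrite a_iff_c.
apply: (prod_cond_weyl_dominant hR f_reg wsR _ wd_dom).
- by rewrite addrA subrK.
- by move=> a aR; rewrite pairD pairN rpredB ?l1_int ?m1_int.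
- by move=> a aR; rewrite pairD pairN rpredB ?l2_int ?m1_int.
Qed.
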